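(* Let $\varphi(\bm x,\bm y,w,\bm z)$ be a $w$-simple Presburger formula (with $\bm u=(\bm x,\bm y,\bm z)$ in the definition below), where $w$ is a single variable and $\bm x,\bm y$ have the same length. Then over $\mathbb{Z}$ the formulas $\exists^{\mathsf{ram}}\bm x,\bm y\colon\exists w\colon\varphi(\bm x,\bm y,w,\bm z)$ and $\exists^{\mathsf{ram}}(\bm x,v_1,v_2),(\bm y,w_1,w_2)\colon\varphi(\bm x,\bm y,v_1+w_2,\bm z)\wedge\bm x\neq\bm y$ are equivalent, where $v_1,v_2,w_1,w_2$ are fresh single variables.
   Context: Work over $\mathbb{Z}$ in the structure $\langle\mathbb{Z};+,<,0,1,(\equiv_e)_{e>0}\rangle$, where the modulo constraint $s\equiv_e t$ holds iff $e$ divides $s-t$. For a vector of variables $\bm u$ and a variable $w$, a formula $\varphi(\bm u,w)$ is $w$-simple if it is a Boolean combination of atoms of the forms $\bm r^\top\bm u+c<w$, $w<\bm r^\top\bm u+c$ (with $\bm r$ an integer vector and $c\in\mathbb{Z}$) and modulo constraints over $\bm u$ and $w$. Ramsey quantifier: $\exists^{\mathsf{ram}}\bm x,\bm y\colon\psi(\bm x,\bm y,\bm z)$ holds for $\bm c$ iff there is an infinite sequence of pairwise distinct integer vectors $(\bm a_i)_{i\ge1}$ with $\psi(\bm a_i,\bm a_j,\bm c)$ for all $i<j$. *)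

From mathcomp Require Import all_boot all_order all_algebra.
Set Implicit Arguments. Unset Strict Implicit. Unset Printing Implicit Defensive.
Import Order.TTheory GRing.Theory Num.Theory.
Local Open Scope ring_scope.

Definition zvec (n : nat) := {ffun 'I_n -> int}.

Definition dot (n : nat) (r : 'I_n -> int) (v : zvec n) : int :=
  \sum_(i < n) r i * v i.

Record uterm (k m : nat) := UTerm {
  ut_x : 'I_k -> int; ut_y : 'I_k -> int; ut_z : 'I_m -> int; ut_c : int }.

Definition eval_uterm k m (t : uterm k m) (x y : zvec k) (z : zvec m) : int :=
  dot (ut_x t) x + dot (ut_y t) y + dot (ut_z t) z + ut_c t.

Record uwterm (k m : nat) := UWTerm { uw_u : uterm k m; uw_w : int }.

Definition eval_uwterm k m (t : uwterm k m) (x y : zvec k) (w : int) (z : zvec m)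
  : int := eval_uterm (uw_u t) x y z + uw_w t * w.

Inductive wsimple (k m : nat) :=
| WTrue
| WFalse
| WLtW of uterm k m
| WGtW of uterm k m
| WMod of nat & uwterm k m & uwterm k m
| WNot of wsimple k m
| WAnd of wsimple k m & wsimple k m
| WOr of wsimple k m & wsimple k m.

Fixpoint wsimple_wf k m (f : wsimple k m) : Prop :=
  match f with
  | WMod e _ _ => (0 < e)%N
  | WNot g => wsimple_wf g
  | WAnd g h | WOr g h => wsimple_wf g /\ wsimple_wf h
  | _ => True
  end.

Fixpoint eval_ws k m (f : wsimple k m) (x y : zvec k) (w : int) (z : zvec m)
  : Prop :=
  match f with
  | WTrue => True
  | WFalse => False
  | WLtW t => eval_uterm t x y z < w
  | WGtW t => w < eval_uterm t x y z
  | WMod e s t =>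
      (e%:Z %| eval_uwterm s x y w z - eval_uwterm t x y w z)%Z
  | WNot g => ~ eval_ws g x y w z
  | WAnd g h => eval_ws g x y w z /\ eval_ws h x y w z
  | WOr g h => eval_ws g x y w z \/ eval_ws h x y w z
  end.

Definition ramsey (D : eqType) (psi : D -> D -> Prop) : Prop :=
  exists a : nat -> D,
    (forall i j : nat, i <> j -> a i <> a j) /\
    (forall i j : nat, (i < j)%N -> psi (a i) (a j)).

(* Along a pair [(x, y)] of the Ramsey sequence, the truth of a w-simple formula
   depends only on the position of [w] relative to the threshold terms
   [t(x, y, z)] and on [w] modulo the product [L] of the moduli.  Hence a witness
   [w] can be moved, inside its cell and residue class, to a value [t + j - L]
   with [t] a threshold term (or [0]) and [0 <= j <= 2L].  Colouring each pair by
   such a choice [(t, j)] uses finitely many colours, so by the infinite Ramsey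
   theorem some subsequence is monochromatic.  Along it the witness
   [t(x_i, x_j, z) + j - L] splits as [v1 + w2] with [v1] depending only on
   [x_i] and [w2] only on [x_j].  The converse direction forgets [v1, v2, w1, w2]. *)

From mathcomp Require Import all_boot all_order all_algebra.
From mathcomp Require Import zify ring.
From Stdlib Require Import Classical ClassicalEpsilon.
Set Implicit Arguments. Unset Strict Implicit. Unset Printing Implicit Defensive.
Import GRing.Theory.

Definition infinite (S : nat -> Prop) := forall N, exists2 n, (N <= n)%N & S n.

Lemma infinite_above (S : nat -> Prop) N :
  infinite S -> infinite (fun n => S n /\ (N <= n)%N).
Proof.
move=> infS M; have [n Mn Sn] := infS (maxn M N).
by exists n; [|split] => //; apply: leq_trans Mn; rewrite ?leq_maxl ?leq_maxr.
Qed.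

Lemma infinite_pigeonhole (T : eqType) (cs : seq T) (S : nat -> Prop) (f : nat -> T) :
  infinite S -> (forall n, S n -> f n \in cs) ->
  exists2 c, c \in cs & infinite (fun n => S n /\ f n = c).
Proof.
elim: cs S => [|c cs IH] S infS fS; first by have [n _ /fS] := infS 0%N.
have [fibre_c|/not_all_ex_not[N fibre_c]] :=
  classic (infinite (fun n => S n /\ f n = c)); first by exists c; rewrite ?mem_head.
have fS' n : S n /\ (N <= n)%N -> f n \in cs.
  move=> [Sn Nn]; move: (fS n Sn); rewrite inE => /predU1P[fc|//].
  by case: fibre_c; exists n.
have [c' c'cs infS'] := IH _ (infinite_above N infS) fS'.
exists c'; first by rewrite inE c'cs orbT.
by move=> M; have [n Mn [[Sn _] fn]] := infS' M; exists n.
Qed.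

Definition elem (S : nat -> Prop) : nat := epsilon (inhabits 0%N) S.

Lemma elemP (S : nat -> Prop) : infinite S -> S (elem S).
Proof. by move=> infS; apply: epsilon_spec; have [n _ Sn] := infS 0%N; exists n. Qed.

Lemma infinite_enum (S : nat -> Prop) : infinite S ->
  exists2 g : nat -> nat, {homo g : i j / (i < j)%N} & forall i, S (g i).
Proof.
move=> infS; pose g := fix g i :=
  if i is i'.+1 then elem (fun n => S n /\ (g i').+1 <= n)%N else elem S.
have g_lt i : (g i < g i.+1)%N by case: (elemP (infinite_above (g i).+1 infS)).
exists g => [|[|i]]; last by case: (elemP (infinite_above (g i).+1 infS)).
- by apply: homo_ltn g_lt => ? ? ?; apply: ltn_trans.
- exact: elemP.
Qed.

Section InfiniteRamsey.
Variables (T : finType) (col : nat -> nat -> T).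

Definition colour_fibre (S : nat -> Prop) (c : T) (n : nat) : Prop :=
  S n /\ (elem S < n)%N /\ col (elem S) n = c.

Definition hom_colour (S : nat -> Prop) : T :=
  epsilon (inhabits (col 0 0)) (fun c => infinite (colour_fibre S c)).

Definition shrink (S : nat -> Prop) : nat -> Prop := colour_fibre S (hom_colour S).

Lemma infinite_shrink S : infinite S -> infinite (shrink S).
Proof.
move=> infS; apply: (epsilon_spec _ (fun c => infinite (colour_fibre S c))).
have [c _ infc] := infinite_pigeonhole (cs := enum T) (f := col (elem S))
  (infinite_above (elem S).+1 infS) (fun n _ => mem_enum T _).
by exists c => N; have [n Nn [[Sn lt_n] cn]] := infc N; exists n.
Qed.

Definition nested (i : nat) : nat -> Prop := iter i shrink (fun _ => True).

Lemma infinite_nested i : infinite (nested i).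
Proof. by elim: i => [N|i]; [exists N|exact: infinite_shrink]. Qed.

Lemma nested_sub i j n : (i <= j)%N -> nested j n -> nested i n.
Proof.
move/subnK <-; elim: (j - i)%N => [//|d IH].
by rewrite addSn /nested iterS => -[/IH].
Qed.

Lemma nested_elem i j : (i < j)%N ->
  (elem (nested i) < elem (nested j))%N /\
  col (elem (nested i)) (elem (nested j)) = hom_colour (nested i).
Proof.
by move=> lt_ij; case: (nested_sub lt_ij (elemP (infinite_nested j))) => _.
Qed.

Theorem ramsey_pairs : exists2 g : nat -> nat, {homo g : i j / (i < j)%N} &
  exists c, forall i j, (i < j)%N -> col (g i) (g j) = c.
Proof.
have infT : infinite (fun _ => True) by move=> N; exists N.
have [c _ infc] := infinite_pigeonhole (cs := enum T)
  (f := fun i => hom_colour (nested i)) infT (fun n _ => mem_enum T _).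
have [h h_mono hc] := infinite_enum infc.
exists (fun i => elem (nested (h i))) => [i j /h_mono/nested_elem[]//|].
by exists c => i j /h_mono/nested_elem[_ ->]; case: (hc i).
Qed.

End InfiniteRamsey.

Local Open Scope ring_scope.

Definition same_cell (s : seq int) (w w' : int) : Prop :=
  {in s, forall u, (u < w) = (u < w') /\ (w < u) = (w' < u)}.

Lemma same_cell_trans s w1 w2 w3 :
  same_cell s w1 w2 -> same_cell s w2 w3 -> same_cell s w1 w3.
Proof. by move=> c12 c23 u us; case: (c12 u us) (c23 u us) => -> -> []. Qed.

Lemma same_cell_cat s1 s2 w w' :
  same_cell (s1 ++ s2) w w' -> same_cell s1 w w' /\ same_cell s2 w w'.
Proof. by move=> c; split=> u us; apply: c; rewrite mem_cat us ?orbT. Qed.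

Lemma cell_representative (s : seq int) (L : nat) (w : int) : (0 < L)%N ->
  exists2 v, v \in 0 :: s & exists2 w', `|w' - v| <= L%:Z &
    same_cell s w w' /\ (L%:Z %| w - w')%Z.
Proof.
move=> L_gt0; move: {2}`|w|%N (leqnn `|w|%N) => n.
elim: n w => [|n IH] w w_n;
  have [/hasP[v vs near_v]|/hasPn far] := boolP (has (fun v => `|w - v| <= L%:Z) (0 :: s));
  try by exists v => //; exists w => //; split=> [u _|]; rewrite ?subrr ?dvdz0.
  by have := far 0 (mem_head _ _); lia.
(* [w] is farther than [L] from [0] and from every threshold, so a step of [L]
   towards [0] changes no comparison and strictly decreases [|w|]. *)
pose w1 := if 0 < w then w - L%:Z else w + L%:Z.
have far0 := far 0 (mem_head _ _).
have [|v vs [w' near_w' [cell dvd]]] := IH w1; first by rewrite /w1; case: ifP; lia.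
exists v => //; exists w' => //; split.
  apply: same_cell_trans cell => u us; have := far u (@mem_behead _ (0 :: s) u us).
  by rewrite /w1; case: ifP; lia.
have -> : w - w' = (w - w1) + (w1 - w') by ring.
by rewrite rpredD //; apply/dvdzP; exists (if 0 < w then 1 else -1); rewrite /w1; case: ifP; lia.
Qed.

Lemma dvdz_natM (a b : nat) (n : int) :
  ((a * b)%N%:Z %| n)%Z -> (a%:Z %| n)%Z /\ (b%:Z %| n)%Z.
Proof.
rewrite PoszM => dvd; split; apply: dvdz_trans dvd.
  exact: dvdz_mulr (dvdzz _).
exact: dvdz_mull (dvdzz _).
Qed.

Section WSimple.
Variables (k m : nat).
Implicit Types (f : wsimple k m) (x y : zvec k) (z : zvec m).

Fixpoint thresholds f : seq (uterm k m) :=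
  match f with
  | WLtW t | WGtW t => [:: t]
  | WNot g => thresholds g
  | WAnd g h | WOr g h => thresholds g ++ thresholds h
  | _ => [::]
  end.

Fixpoint modulus f : nat :=
  match f with
  | WMod e _ _ => e
  | WNot g => modulus g
  | WAnd g h | WOr g h => (modulus g * modulus h)%N
  | _ => 1%N
  end.

Lemma modulus_gt0 f : wsimple_wf f -> (0 < modulus f)%N.
Proof. by elim: f => //= [g IHg h IHh|g IHg h IHh] [/IHg + /IHh]; rewrite muln_gt0 => ->. Qed.

Lemma eval_ws_congr f x y z w w' :
  same_cell [seq eval_uterm t x y z | t <- thresholds f] w w' ->
  ((modulus f)%:Z %| w - w')%Z ->
  eval_ws f x y w z <-> eval_ws f x y w' z.
Proof.
elim: f => //= [t|t|e s t|g IHg|g IHg h IHh|g IHg h IHh] cell dvd.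
- by case: (cell _ (mem_head _ _)) => ->.
- by case: (cell _ (mem_head _ _)) => _ ->.
- have -> : eval_uwterm s x y w z - eval_uwterm t x y w z =
      eval_uwterm s x y w' z - eval_uwterm t x y w' z + (uw_w s - uw_w t) * (w - w').
    by rewrite /eval_uwterm; ring.
  by rewrite rpredDr // dvdz_mull.
- by rewrite IHg.
- move: cell dvd; rewrite map_cat => /same_cell_cat[cg ch] /dvdz_natM[dg dh].
  by rewrite IHg // IHh.
- move: cell dvd; rewrite map_cat => /same_cell_cat[cg ch] /dvdz_natM[dg dh].
  by rewrite IHg // IHh.
Qed.

Definition uterm0 : uterm k m := UTerm (fun _ => 0) (fun _ => 0) (fun _ => 0) 0.

Lemma eval_uterm0 x y z : eval_uterm uterm0 x y z = 0.
Proof. by rewrite /eval_uterm /dot !big1 ?addr0 // => i _; rewrite mul0r. Qed.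

(* The colour [(l, j)] names the candidate witness [t_l + j - L], where [t_0] is
   the zero term and [t_(i+1)] the [i]-th threshold. *)
Definition colour f := ('I_(size (thresholds f)).+1 * 'I_(modulus f).*2.+1)%type.

Definition colour_term f (c : colour f) : uterm k m :=
  nth uterm0 (uterm0 :: thresholds f) c.1.

Definition colour_witness f (c : colour f) x y z : int :=
  eval_uterm (colour_term c) x y z + c.2%:Z - (modulus f)%:Z.

Definition witness_left f (c : colour f) x z : int :=
  dot (ut_x (colour_term c)) x + dot (ut_z (colour_term c)) z
    + ut_c (colour_term c) + c.2%:Z - (modulus f)%:Z.

Definition witness_right f (c : colour f) y : int := dot (ut_y (colour_term c)) y.

Lemma colour_witness_split f (c : colour f) x y z :
  colour_witness c x y z = witness_left c x z + witness_right c y.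
Proof. by rewrite /colour_witness /witness_left /witness_right /eval_uterm; ring. Qed.

Lemma exists_colour_witness f x y z w : wsimple_wf f -> eval_ws f x y w z ->
  exists c : colour f, eval_ws f x y (colour_witness c x y z) z.
Proof.
move=> wf fw; pose ev t := eval_uterm t x y z; pose T0 := uterm0 :: thresholds f.
have [v v_in [w' near [cell dvd]]] :=
  cell_representative (map ev (thresholds f)) w (modulus_gt0 wf).
have v_T0 : v \in map ev T0 by rewrite /= /ev eval_uterm0.
have l_lt : (index v (map ev T0) < (size (thresholds f)).+1)%N.
  by rewrite -[X in (_ < X)%N](size_map ev T0) index_mem.
have j_lt : (absz (w' - v + (modulus f)%:Z)%R < (modulus f).*2.+1)%N by lia.
exists (Ordinal l_lt, Ordinal j_lt).
have -> : colour_witness (Ordinal l_lt, Ordinal j_lt) x y z = w'.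
  rewrite /colour_witness /colour_term /= -/(ev _) -(nth_map uterm0 0) ?nth_index //.
  lia.
exact: (eval_ws_congr cell dvd).1.
Qed.

End WSimple.

Corollary ramsey_pairs_rel (T : finType) (P : nat -> nat -> T -> Prop) :
  (forall i j, (i < j)%N -> exists c, P i j c) ->
  exists2 g : nat -> nat, {homo g : i j / (i < j)%N} &
    exists c, forall i j, (i < j)%N -> P (g i) (g j) c.
Proof.
move=> P_ex; have [c0 _] := P_ex 0%N 1%N isT.
have [g g_mono [c g_col]] := ramsey_pairs (fun i j => epsilon (inhabits c0) (P i j)).
exists g => //; exists c => i j lt_ij; rewrite -(g_col i j lt_ij).
exact: epsilon_spec (P_ex _ _ (g_mono _ _ lt_ij)).
Qed.

Section Elimination.
Variables (k m : nat) (phi : wsimple k m) (z : zvec m).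

Let exists_witness (x y : zvec k) : Prop := exists w, eval_ws phi x y w z.

Let split_witness (p q : zvec k * int * int) : Prop :=
  let: (x, v1, v2) := p in let: (y, w1, w2) := q in
  eval_ws phi x y (v1 + w2) z /\ x <> y.

Lemma ramsey_split_witness : ramsey split_witness -> ramsey exists_witness.
Proof.
case=> b [_ b_rel].
have b_split i j : (i < j)%N -> eval_ws phi (b i).1.1 (b j).1.1 ((b i).1.2 + (b j).2) z
    /\ (b i).1.1 <> (b j).1.1.
  by move=> /b_rel; case: (b i) => [[? ?] ?]; case: (b j) => [[? ?] ?].
exists (fun i => (b i).1.1); split=> i j; last by case/b_split => phi_ij _; exists ((b i).1.2 + (b j).2).
by case: (ltngtP i j) => [/b_split[_ ne] _|/b_split[_ ne] _ /esym|->].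
Qed.

Hypothesis phi_wf : wsimple_wf phi.

Lemma ramsey_exists_witness : ramsey exists_witness -> ramsey split_witness.
Proof.
case=> a [a_inj a_rel].
have colour_ex i j : (i < j)%N ->
    exists c : colour phi, eval_ws phi (a i) (a j) (colour_witness c (a i) (a j) z) z.
  by case/a_rel => w; apply: exists_colour_witness.
have [g g_mono [c g_col]] := ramsey_pairs_rel colour_ex.
have ag_inj i j : i <> j -> a (g i) <> a (g j).
  move=> ne_ij; apply: a_inj => e.
  by case: (ltngtP i j) ne_ij => [/g_mono|/g_mono|->//]; rewrite e ltnn.
exists (fun i => (a (g i), witness_left c (a (g i)) z, witness_right c (a (g i)))).
split=> [i j ne_ij [e _ _]|i j lt_ij /=]; first exact: ag_inj ne_ij e.
split; last by apply: ag_inj => e; rewrite e ltnn in lt_ij.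
by rewrite -colour_witness_split; apply: g_col.
Qed.

End Elimination.

Theorem mainTheorem4 (k m : nat) (phi : wsimple k m) (z : zvec m) :
  wsimple_wf phi ->
  (ramsey (fun x y : zvec k => exists w : int, eval_ws phi x y w z)
   <->
   ramsey (fun p q : zvec k * int * int =>
             let: (x, v1, v2) := p in
             let: (y, w1, w2) := q in
             eval_ws phi x y (v1 + w2) z /\ x <> y)).
Proof.
by move=> phi_wf; split; [exact: ramsey_exists_witness|exact: ramsey_split_witness].
Qed.
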